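(* Let $p$ be a prime and $C\subseteq\mathbb{F}_p^{2n}$ a symplectic self-dual code, i.e. $C=C^{\perp_s}$. Let $J\subsetneq\{1,\dots,n\}$ be nonempty and $\overline J=\{1,\dots,n\}\setminus J$. Then for each (unit) $|\varphi\rangle\in Q(C)$, the partial trace $\mathrm{tr}_{\overline J}[|\varphi\rangle\langle\varphi|]$ is a completely mixed state on $Q(\sigma_J(C))$.
   Context: Vectors of $\mathbb{F}_p^{2n}$ are written $(\mathbf a|\mathbf b)$, coordinate pairs $(a_j,b_j)$ indexed by $j\in\{1,\dots,n\}$; symplectic form $(\mathbf a|\mathbf b)\cdot_s(\mathbf c|\mathbf d)=\mathbf a\cdot\mathbf d-\mathbf b\cdot\mathbf c$, dual $C^{\perp_s}$. For $R\subseteq\{1,\dots,n\}$: $\pi_R(\mathbf a|\mathbf b)=(a_j|b_j)_{j\in R}$ and $\sigma_R(D)=\{\pi_R(\mathbf y):\mathbf y=(\mathbf a|\mathbf b)\in D,\ \mathrm{supp}(\mathbf a)\cup\mathrm{supp}(\mathbf b)\subseteq R\}$. Let $\xi=e^{2\pi\iota/p}$, $X(a)|x\rangle=|x+a\rangle$, $Z(b)|x\rangle=\xi^{bx}|x\rangle$ on $\mathbb C^p$, $E_{(\mathbf a,\mathbf b)}=\bigotimes_jX(a_j)Z(b_j)$. For a symplectic self-orthogonal $D\subseteq\mathbb F_p^{2m}$, $Q(D)\subseteq\mathbb C^{p^m}$ is the common eigenspace $\{v:Ev=\lambda(E)v\ \forall E\in S\}$, $S$ generated by the scalars $\xi^\ell\mathcal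 I$ and the $E_{\mathbf y}$, $\mathbf y\in D$, with $\lambda$ a character, $\lambda(\xi\mathcal I)=\xi$. The character for $Q(\sigma_J(C))$ is chosen compatibly: for $\mathbf z\in\sigma_J(C)$ and $\mathbf y\in C$ with $\pi_J(\mathbf y)=\mathbf z$ and zero outside $J$, $\lambda(E_{\mathbf z})=\lambda(E_{\mathbf y})$. A completely mixed state on a subspace $V$ is the equal probabilistic mixture of the states of an orthonormal basis of $V$, i.e. $P_V/\dim V$ with $P_V$ the orthogonal projector onto $V$. *)

From HB Require Import structures.
From mathcomp Require Import all_boot all_order all_algebra.
Set Implicit Arguments. Unset Strict Implicit. Unset Printing Implicit Defensive.
Import Order.TTheory GRing.Theory Num.Theory.
Local Open Scope ring_scope.

Section Defs.
Variable p : nat.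

(* vectors of F_p^{2m}: coordinate pairs (a_j, b_j), j < m *)
Definition Vec (m : nat) := {ffun 'I_m -> 'F_p * 'F_p}.
(* computational basis labels |x>, x in F_p^m *)
Definition Basis (m : nat) := {ffun 'I_m -> 'F_p}.

Definition symp m (y z : Vec m) : 'F_p :=
  \sum_(j < m) ((y j).1 * (z j).2 - (y j).2 * (z j).1).

Definition sdual m (D : {set Vec m}) : {set Vec m} :=
  [set y | [forall z in D, symp y z == 0]].

(* pi_R for R = J, coordinates of J listed increasingly *)
Definition piJ n (J : {set 'I_n}) (y : Vec n) : Vec #|J| :=
  [ffun i => y (enum_val i)].

Definition sigmaJ n (J : {set 'I_n}) (D : {set Vec n}) : {set Vec #|J|} :=
  [set piJ J y | y in [set y in D | [forall j, (j \notin J) ==> (y j == (0, 0))]]].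

Variable K : numClosedFieldType.

(* xi = e^{2 pi i / p} = (e^{i pi / p})^2 *)
Definition xi : K := (p.-root (-1)) ^+ 2.

(* operators on C^{p^m}, as kernels: (E v)(u) = sum_w E u w * v w *)
Definition Op m := Basis m -> Basis m -> K.
Definition opapp m (E : Op m) (v : Basis m -> K) : Basis m -> K :=
  fun u => \sum_w E u w * v w.
Definition opmul m (E F : Op m) : Op m :=
  fun u w => \sum_x E u x * F x w.
Definition scalop m (c : K) : Op m := fun u w => if u == w then c else 0.

(* E_(a,b) = tensor_j X(a_j) Z(b_j) :  |x> |-> xi^{b.x} |x + a> *)
Definition Eop m (y : Vec m) : Op m :=
  fun u w =>
    if u == [ffun j => w j + (y j).1]
    then xi ^+ (nat_of_ord (\sum_(j < m) (y j).2 * w j)) else 0.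

Inductive inS m (D : {set Vec m}) : Op m -> Prop :=
| inS_scal (l : nat) : inS D (@scalop m (xi ^+ l))
| inS_E (y : Vec m) : y \in D -> inS D (Eop y)
| inS_mul (E F : Op m) : inS D E -> inS D F -> inS D (opmul E F).

Definition is_char m (D : {set Vec m}) (lam : Op m -> K) : Prop :=
  lam (@scalop m xi) = xi /\
  (forall E F, inS D E -> inS D F -> lam (opmul E F) = lam E * lam F) /\
  (forall E F, inS D E -> (forall u w, E u w = F u w) -> lam E = lam F).

Definition inQ m (D : {set Vec m}) (lam : Op m -> K) (v : Basis m -> K) : Prop :=
  forall E, inS D E -> forall u, opapp E v u = lam E * v u.

Definition proj m (v : Basis m -> K) : Op m := fun u w => v u * (v w)^*.

Definition resJ n (J : {set 'I_n}) (x : Basis n) : Basis #|J| :=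
  [ffun i => x (enum_val i)].

Definition ptrace n (J : {set 'I_n}) (rho : Op n) : Op #|J| :=
  fun s t => \sum_(x : Basis n) \sum_(y : Basis n |
      [&& resJ J x == s, resJ J y == t & [forall j, (j \notin J) ==> (x j == y j)]])
      rho x y.

(* completely mixed state on the subspace V: equal mixture of the states of an
   orthonormal basis of V, i.e. P_V / dim V *)
Definition completely_mixed m (V : (Basis m -> K) -> Prop) (rho : Op m) : Prop :=
  exists (d : nat) (e : 'I_d -> Basis m -> K),
    (0 < d)%N /\
    (forall i, V (e i)) /\
    (forall i j, \sum_x e i x * (e j x)^* = (i == j)%:R) /\
    (forall v, V v -> exists c : 'I_d -> K, forall x, v x = \sum_i c i * e i x) /\
    (forall s t, rho s t = d%:R^-1 * \sum_i e i s * (e i t)^*).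

End Defs.

(** Write [rho] for the partial trace of [|phi><phi|]. Its coordinate on the Pauli
    operator [E_z] is the coordinate of [|phi><phi|] on [E_y], where [y] extends [z] by
    zero outside [J]. If [y] is not in [C = C^perp], some [g] in [C] has
    [symp y g <> 0]; conjugation by [E_g] fixes [|phi><phi|] but multiplies that
    coordinate by [xi ^ symp y g <> 1], so it vanishes. Hence [rho] is a combination of
    the [E_z] with [z] in [sigma_J(C)] and acts on [Q(sigma_J(C))] as a scalar. Moreover
    [E_z rho = lam'(E_z) rho] for those [z], so the range of [rho] lies in
    [Q(sigma_J(C))]. A Hermitian trace-one operator with these two properties is the
    normalised projector onto [Q(sigma_J(C))]. *)

From Pilot Require Import Defs.
From HB Require Import structures.
From mathcomp Require Import all_boot all_order all_algebra.
From mathcomp Require Import sesquilinear spectral ring.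
Import Order.TTheory GRing.Theory Num.Theory.
Local Open Scope ring_scope.

Set Implicit Arguments. Unset Strict Implicit. Unset Printing Implicit Defensive.

Section AdditiveCharacter.
Variables (K : numClosedFieldType) (p : nat).
Hypothesis p_prime : prime p.
Local Notation xi := (xi p K).

Lemma xi_expp : xi ^+ p = 1.
Proof.
by rewrite /Defs.xi -exprM mulnC exprM rootCK ?prime_gt0 // sqrrN expr1n.
Qed.

Lemma xi_neq1 : xi != 1.
Proof.
have p_gt1 := prime_gt1 p_prime; set r := p.-root (-1 : K).
have r_p : r ^+ p = -1 by rewrite rootCK ?prime_gt0.
apply/eqP; rewrite /Defs.xi -/r => /eqP; rewrite sqrf_eq1 => /orP[]/eqP r_eq.
  by move/eqP: r_p; rewrite r_eq expr1n -subr_eq0 opprK -mulr2n -mulr_natl mulr1 pnatr_eq0.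
by have := rootC_lt0 (-1 : K) p_gt1; rewrite -/r r_eq ltrN10.
Qed.

Lemma xi_neq0 : xi != 0.
Proof.
apply: contra_eqN xi_expp => /eqP->.
by rewrite expr0n gtn_eqF ?prime_gt0 // eq_sym oner_eq0.
Qed.

Lemma xi_conjM : xi * xi^* = 1.
Proof.
rewrite -normCK; suff -> : `|xi| = 1 by rewrite expr1n.
by apply/eqP; rewrite -(pexpr_eq1 (prime_gt0 p_prime)) // -normrX xi_expp normr1.
Qed.

Definition achar (k : 'F_p) : K := xi ^+ k.

Lemma achar0 : achar 0 = 1.
Proof. exact: expr0. Qed.

Lemma achar_natr n : achar n%:R = xi ^+ n.
Proof. by rewrite /achar val_Fp_nat // expr_mod ?xi_expp. Qed.

Lemma acharD k l : achar (k + l) = achar k * achar l.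
Proof. by rewrite -(natr_Zp k) -(natr_Zp l) -natrD !achar_natr exprD. Qed.

Lemma achar_conjM k : achar k * (achar k)^* = 1.
Proof. by rewrite /achar rmorphXn -exprMn xi_conjM expr1n. Qed.

Lemma achar_conj k : (achar k)^* = achar (- k).
Proof.
have achar_neq0 : achar k != 0.
  by apply: contra_eqN (achar_conjM k) => /eqP->; rewrite mul0r eq_sym oner_eq0.
by apply: (mulfI achar_neq0); rewrite achar_conjM -acharD subrr achar0.
Qed.

Lemma achar_eq1 k : (achar k == 1) = (k == 0).
Proof.
apply/idP/eqP => [/eqP achar_k|->]; last by rewrite achar0.
apply/eqP; apply: contraT => k_neq0; rewrite -(negbTE xi_neq1).
have -> : xi = achar k ^+ k^-1.
  by rewrite -[in achar k](natr_Zp k) achar_natr -exprM -achar_natr natrM !natr_Zp mulfV.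
by rewrite achar_k expr1n.
Qed.

Lemma achar_fixed0 k (x : K) : k != 0 -> x = achar k * x -> x = 0.
Proof.
move=> k_neq0 /eqP; rewrite -subr_eq0 -{1}[x]mul1r -mulrBl mulf_eq0 subr_eq0 eq_sym.
by rewrite achar_eq1 (negbTE k_neq0) => /eqP.
Qed.

End AdditiveCharacter.

Section PauliOperators.
Variables (K : numClosedFieldType) (p m : nat).
Hypothesis p_prime : prime p.
Local Notation achar := (@achar K p).
Implicit Types (a b x : Basis p m) (y : Vec p m).

Definition Xpart y : Basis p m := [ffun j => (y j).1].
Definition Zpart y : Basis p m := [ffun j => (y j).2].
Definition fdot a b : 'F_p := \sum_j a j * b j.

Lemma fdotC a b : fdot a b = fdot b a.
Proof. by apply: eq_bigr => j _; rewrite mulrC. Qed.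

Lemma fdotDr a b x : fdot a (b + x) = fdot a b + fdot a x.
Proof. by rewrite /fdot -big_split; apply: eq_bigr => j _; rewrite ffunE mulrDr. Qed.

Lemma fdotDl a b x : fdot (b + x) a = fdot b a + fdot x a.
Proof. by rewrite fdotC fdotDr !(fdotC a). Qed.

Lemma fdotNr a b : fdot a (- b) = - fdot a b.
Proof. by rewrite /fdot -sumrN; apply: eq_bigr => j _; rewrite ffunE mulrN. Qed.

Lemma fdotr0 a : fdot a 0 = 0.
Proof. by rewrite /fdot big1 // => j _; rewrite ffunE mulr0. Qed.

Lemma symp_fdot y g : symp y g = fdot (Xpart y) (Zpart g) - fdot (Zpart y) (Xpart g).
Proof. by rewrite /symp /fdot -sumrB; apply: eq_bigr => j _; rewrite !ffunE. Qed.

Lemma EopE y u w :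
  Eop K y u w = if u == w + Xpart y then achar (fdot (Zpart y) w) else 0.
Proof.
rewrite /Eop; have -> : [ffun j => w j + (y j).1] = w + Xpart y.
  by apply/ffunP => j; rewrite !ffunE.
by rewrite /fdot; under [in RHS]eq_bigr do rewrite ffunE.
Qed.

Lemma opapp_Eop y (v : Basis p m -> K) u :
  opapp (Eop K y) v u = achar (fdot (Zpart y) (u - Xpart y)) * v (u - Xpart y).
Proof.
rewrite /opapp (bigD1 (u - Xpart y)) //= EopE subrK eqxx big1 ?addr0 // => w w_neq.
by rewrite EopE -subr_eq eq_sym (negbTE w_neq) mul0r.
Qed.

Lemma sum_achar_fdot c :
  \sum_b achar (fdot b c) = if c == 0 then #|{: Basis p m}|%:R else 0.
Proof.
have [->|c_neq0] := eqVneq c 0.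
  by under eq_bigr do rewrite fdotr0 achar0; rewrite sumr_const.
have [j cj_neq0] : exists j, c j != 0.
  apply/existsP; apply: contraNT c_neq0 => /existsPn c0.
  by apply/eqP/ffunP => j; rewrite ffunE; apply/eqP; rewrite -[_ == _]negbK c0.
pose d : Basis p m := [ffun i => (i == j)%:R].
have fdot_d : fdot d c = c j.
  rewrite /fdot (bigD1 j) //= big1 ?addr0 => [|i /negbTE ij]; rewrite ffunE ?eqxx ?mul1r //.
  by rewrite ij mul0r.
apply: (achar_fixed0 p_prime cj_neq0); rewrite mulr_sumr (reindex_inj (addIr d)) /=.
by apply: eq_bigr => b _; rewrite fdotDl acharD // mulrC; congr (achar _ * _).
Qed.

Definition pairVec (ab : Basis p m * Basis p m) : Vec p m := [ffun j => (ab.1 j, ab.2 j)].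

Lemma Xpart_pairVec a b : Xpart (pairVec (a, b)) = a.
Proof. by apply/ffunP => j; rewrite !ffunE. Qed.

Lemma Zpart_pairVec a b : Zpart (pairVec (a, b)) = b.
Proof. by apply/ffunP => j; rewrite !ffunE. Qed.

Lemma sum_Vec (F : Vec p m -> K) : \sum_y F y = \sum_a \sum_b F (pairVec (a, b)).
Proof.
rewrite pair_big (reindex pairVec) /=; first by apply: eq_bigr => -[].
apply: onW_bij; exists (fun y => (Xpart y, Zpart y)) => [[a b]|y].
  by rewrite Xpart_pairVec Zpart_pairVec.
by apply/ffunP => j; rewrite !ffunE; case: (y j).
Qed.

Lemma sum_Eop_conjM u w s t :
  \sum_(y : Vec p m) (Eop K y u w)^* * Eop K y s t
  = if (u == s) && (w == t) then #|{: Basis p m}|%:R else 0.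
Proof.
have sum_Z a : \sum_b (Eop K (pairVec (a, b)) u w)^* * Eop K (pairVec (a, b)) s t
    = if (u == w + a) && (s == t + a) then \sum_b achar (fdot b (t - w)) else 0.
  under eq_bigr do rewrite !EopE Xpart_pairVec Zpart_pairVec.
  have [_|_] := eqVneq u (w + a); last by rewrite big1 // => b _; rewrite conjC0 mul0r.
  have [_|_] := eqVneq s (t + a); last by rewrite big1 // => b _; rewrite mulr0.
  by apply: eq_bigr => b _; rewrite achar_conj // -acharD // fdotDr fdotNr addrC.
rewrite sum_Vec; under eq_bigr do rewrite sum_Z sum_achar_fdot subr_eq0.
have [-> | t_neq_w] := eqVneq t w; last first.
  rewrite big1 => [|a _]; last by case: ifP.
  by case: eqVneq => // _; case: eqVneq => // t_eq; rewrite t_eq eqxx in t_neq_w.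
rewrite (bigD1 (u - w)) //= subrKC eqxx andbT eq_sym big1 ?addr0 ?eqxx // => a a_neq.
by case: eqVneq => //= u_eq; rewrite u_eq addrC addKr eqxx in a_neq.
Qed.

Definition Eop_coord (y : Vec p m) (M : Op p K m) : K :=
  \sum_u \sum_w (Eop K y u w)^* * M u w.

Lemma Eop_coordE y M :
  Eop_coord y M = \sum_w (achar (fdot (Zpart y) w))^* * M (w + Xpart y) w.
Proof.
rewrite /Eop_coord exchange_big; apply: eq_bigr => w _.
rewrite (bigD1 (w + Xpart y)) //= EopE eqxx big1 ?addr0 // => u /negbTE u_neq.
by rewrite EopE u_neq conjC0 mul0r.
Qed.

Lemma Eop_expansion M s t :
  M s t = #|{: Basis p m}|%:R^-1 * \sum_y Eop_coord y M * Eop K y s t.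
Proof.
have N_neq0 : #|{: Basis p m}|%:R != 0 :> K.
  by rewrite pnatr_eq0 -lt0n; apply/card_gt0P; exists 0.
have -> : \sum_y Eop_coord y M * Eop K y s t
    = \sum_u \sum_w M u w * \sum_y (Eop K y u w)^* * Eop K y s t.
  under eq_bigr do rewrite mulr_suml; rewrite exchange_big; apply: eq_bigr => u _.
  under eq_bigr do rewrite mulr_suml; rewrite exchange_big; apply: eq_bigr => w _.
  by rewrite mulr_sumr; apply: eq_bigr => y _; rewrite mulrAC mulrC.
under eq_bigr do under eq_bigr do rewrite sum_Eop_conjM.
rewrite (bigD1 s) //= [X in _ + X]big1 ?addr0 => [|u /negbTE u_neq]; last first.
  by rewrite big1 // => w _; rewrite u_neq mulr0.
rewrite (bigD1 t) //= big1 ?addr0 => [|w /negbTE w_neq]; last by rewrite w_neq andbF mulr0.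
by rewrite !eqxx /= mulrC mulfK.
Qed.

End PauliOperators.

Section Stabilizer.
Variables (K : numClosedFieldType) (p m : nat).
Hypothesis p_prime : prime p.
Variables (D : {set Vec p m}) (lam : Op p K m -> K).
Hypothesis lam_char : is_char D lam.
Local Notation xi := (xi p K).
Local Notation scalop := (@scalop p K m).

Lemma opappM (E F : Op p K m) v u : opapp (opmul E F) v u = opapp E (opapp F v) u.
Proof.
rewrite /opapp /opmul; under eq_bigr do rewrite mulr_suml.
rewrite exchange_big; apply: eq_bigr => x _; rewrite mulr_sumr.
by apply: eq_bigr => w _; rewrite mulrA.
Qed.

Lemma opapp_scalop c v u : opapp (scalop c) v u = c * v u.
Proof.
rewrite /opapp (bigD1 u) //= /scalop eqxx big1 ?addr0 // => w /negbTE w_neq.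
by rewrite eq_sym w_neq mul0r.
Qed.

Lemma opmul_scalop a b u w : opmul (scalop a) (scalop b) u w = scalop (a * b) u w.
Proof. by rewrite [LHS]opapp_scalop /scalop; case: eqP; rewrite ?mulr0. Qed.

Lemma lam_scalop l : lam (scalop (xi ^+ l)) = xi ^+ l.
Proof.
have [lam_xi [lamM lam_eq]] := lam_char.
have lamM_scalop i j :
    lam (scalop (xi ^+ (i + j))) = lam (scalop (xi ^+ i)) * lam (scalop (xi ^+ j)).
  rewrite -lamM; try exact: inS_scal.
  by apply: lam_eq => [|u w]; [exact: inS_scal | rewrite opmul_scalop exprD].
have xi_neq0 := xi_neq0 K p_prime.
have lam_xi1 : lam (scalop (xi ^+ 1)) = xi := lam_xi.
have lam1 : lam (scalop (xi ^+ 0)) = 1.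
  by apply: (mulIf xi_neq0); rewrite mul1r -{2}lam_xi1 -lamM_scalop; exact: lam_xi.
by elim: l => [|l IHl] //; rewrite -addn1 lamM_scalop IHl lam_xi1 exprD.
Qed.

Lemma inQ_generators v :
  (forall y, y \in D -> forall u, opapp (Eop K y) v u = lam (Eop K y) * v u) ->
  inQ D lam v.
Proof.
have [_ [lamM _]] := lam_char.
move=> inQ_E E; elim=> {E} [l|y /inQ_E //|E F E_S IHE F_S IHF] u.
  by rewrite opapp_scalop lam_scalop.
rewrite opappM lamM // [lam E * _]mulrC -mulrA -IHE /opapp mulr_sumr.
by apply: eq_bigr => w _; rewrite -/(opapp F v w) IHF mulrCA.
Qed.

Lemma inQ_eq v w : v =1 w -> inQ D lam v -> inQ D lam w.
Proof.
move=> vw Qv E E_S u; rewrite -vw -Qv //.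
by apply: eq_bigr => x _; rewrite vw.
Qed.

Lemma inQ_scale a v : inQ D lam v -> inQ D lam (fun u => a * v u).
Proof.
move=> Qv E E_S u; rewrite mulrCA -Qv // [RHS]mulr_sumr.
by apply: eq_bigr => w _; rewrite mulrCA.
Qed.

Lemma opmul_proj_inQ v E : inQ D lam v -> inS D E ->
  forall u w, opmul E (proj v) u w = lam E * proj v u w.
Proof.
move=> Qv E_S u w; rewrite /proj mulrA -(Qv E E_S u) /opapp mulr_suml.
by apply: eq_bigr => x _; rewrite mulrA.
Qed.

Lemma opapp_inQ M :
  (forall y, y \in D -> forall u w, opmul (Eop K y) M u w = lam (Eop K y) * M u w) ->
  forall v, inQ D lam (opapp M v).
Proof.
move=> M_eig v; apply: inQ_generators => y y_D u.
rewrite -opappM /opapp mulr_sumr; apply: eq_bigr => w _.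
by rewrite M_eig // mulrA.
Qed.

Lemma opapp_scalar_inQ M : (forall y, y \notin D -> Eop_coord y M = 0) ->
  exists c, forall v, inQ D lam v -> forall s, opapp M v s = c * v s.
Proof.
move=> M_supp; pose N : K := #|{: Basis p m}|%:R.
exists (N^-1 * \sum_(y in D) Eop_coord y M * lam (Eop K y)) => v Qv s.
have -> : opapp M v s = N^-1 * \sum_y Eop_coord y M * opapp (Eop K y) v s.
  rewrite /opapp; under eq_bigr do rewrite (Eop_expansion p_prime M) -mulrA mulr_suml.
  rewrite -mulr_sumr exchange_big; congr (_ * _); apply: eq_bigr => y _.
  by rewrite mulr_sumr; apply: eq_bigr => t _; rewrite mulrA.
rewrite (bigID (mem D)) /= [X in _ + X]big1 ?addr0 => [|y /M_supp ->]; last by rewrite mul0r.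
rewrite -mulrA mulr_suml; congr (_ * _); apply: eq_bigr => y y_D.
by rewrite (Qv _ (inS_E K y_D)) mulrA.
Qed.

End Stabilizer.

Section Spectral.
Variables (K : numClosedFieldType) (p m : nat).
Local Notation T := (Basis p m).
Local Open Scope sesquilinear_scope.

Definition hermitian_op (rho : Op p K m) := forall s t, rho t s = (rho s t)^*.

Lemma proj_hermitian v : hermitian_op (proj v).
Proof. by move=> s t; rewrite /proj rmorphM /= conjCK mulrC. Qed.

Definition orthonormal d (e : 'I_d -> T -> K) :=
  forall i j, \sum_x e i x * (e j x)^* = (i == j)%:R.

Lemma hermitian_spectral rho : hermitian_op rho ->
  exists d (f : 'I_d -> T -> K) (ev : 'I_d -> K),
    orthonormal f /\ forall s t, rho s t = \sum_k ev k * f k s * (f k t)^*.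
Proof.
move=> rho_herm; pose M : 'M[K]_#|T| := \matrix_(i, j) rho (enum_val i) (enum_val j).
have M_normal : M \is normalmx.
  suff M_selfadj : M ^t* = M by apply/normalmxP; rewrite M_selfadj.
  by apply/matrixP => i j; rewrite !mxE rho_herm conjCK.
pose P := spectralmx M; pose ev := spectral_diag M.
have P_unitary : P \is unitarymx := spectral_unitarymx M.
have M_diag := orthomx_spectralP M_normal; rewrite invmx_unitary // in M_diag.
pose f k (x : T) := (P k (enum_rank x))^*.
exists #|T|, f, (ev 0); split.
  move=> i j; rewrite (reindex _ (onW_bij _ (enum_val_bij T))) /f.
  rewrite eq_sym; move/unitarymxP: P_unitary => /matrixP /(_ j i); rewrite !mxE => <-.
  by apply: eq_bigr => l _; rewrite !mxE enum_valK conjCK mulrC.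
move=> s t; have := congr1 (fun A : 'M_#|T| => A (enum_rank s) (enum_rank t)) M_diag.
rewrite /= mul_mx_diag !mxE !enum_rankK => ->; apply: eq_bigr => k _.
by rewrite /f !mxE conjCK [_ * ev 0 k]mulrC.
Qed.

Lemma opapp_spectral d (f : 'I_d -> T -> K) (ev : 'I_d -> K) (rho : Op p K m) :
  orthonormal f -> (forall s t, rho s t = \sum_k ev k * f k s * (f k t)^*) ->
  forall k s, opapp rho (f k) s = ev k * f k s.
Proof.
move=> f_on rhoE k s; rewrite /opapp; under eq_bigr do rewrite rhoE mulr_suml.
rewrite exchange_big (bigD1 k) //= [X in _ + X]big1 ?addr0 => [|l l_neq].
  under eq_bigr do rewrite mulrAC -mulrA.
  by rewrite -mulr_sumr f_on eqxx mulr1.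
under eq_bigr do rewrite mulrAC -mulrA.
by rewrite -mulr_sumr f_on eq_sym (negbTE l_neq) mulr0.
Qed.

Lemma completely_mixed_scalar (V : (T -> K) -> Prop) (rho : Op p K m) c :
  (forall v w, v =1 w -> V v -> V w) -> (forall a v, V v -> V (fun s => a * v s)) ->
  hermitian_op rho -> \sum_s rho s s = 1 ->
  (forall v, V (opapp rho v)) -> (forall v, V v -> forall s, opapp rho v s = c * v s) ->
  completely_mixed V rho.
Proof.
move=> V_eq V_scale /hermitian_spectral[d [f [ev [f_on rhoE]]]] rho_tr rho_range rho_scalar.
have f_eig := opapp_spectral f_on rhoE.
have f_V k : ev k != 0 -> V (f k).
  move=> ev_neq0; apply: V_eq (V_scale (ev k)^-1 _ (rho_range (f k))) => s.
  by rewrite f_eig mulKf.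
have ev_c k : ev k != 0 -> ev k = c.
  move=> ev_neq0; have [s fs_neq0] : exists s, f k s != 0.
    apply/existsP; apply: contraT => /existsPn f0.
    have := f_on k k; rewrite eqxx big1 => [/eqP|x _]; last by rewrite (eqP (negPn (f0 x))) mul0r.
    by rewrite eq_sym oner_eq0.
  by apply: (mulIf fs_neq0); rewrite -f_eig (rho_scalar _ (f_V k ev_neq0)).
pose S := [set k | ev k != 0]; pose e (i : 'I_#|S|) := f (enum_val i).
have rhoS s t : rho s t = c * \sum_i e i s * (e i t)^*.
  rewrite rhoE (bigID (mem S)) /= [X in _ + X]big1 ?addr0 => [|k]; last first.
    by rewrite inE negbK => /eqP->; rewrite !mul0r.
  rewrite big_enum_val mulr_sumr; apply: eq_bigr => i _.
  by rewrite ev_c ?mulrA //; have := enum_valP i; rewrite inE.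
have Sc : #|S|%:R * c = 1.
  rewrite -[RHS]rho_tr; under [RHS]eq_bigr do rewrite rhoS.
  rewrite -mulr_sumr exchange_big mulrC; congr (_ * _).
  by under eq_bigr do rewrite f_on eqxx; rewrite sumr_const card_ord.
have S_neq0 : #|S|%:R != 0 :> K by apply: contra_eqN Sc => /eqP->; rewrite mul0r eq_sym oner_eq0.
have c_neq0 : c != 0 by apply: contra_eqN Sc => /eqP->; rewrite mulr0 eq_sym oner_eq0.
exists #|S|, e; do ![split].
- by rewrite lt0n; apply: contraNneq S_neq0 => ->.
- by move=> i; apply: f_V; have := enum_valP i; rewrite inE.
- by move=> i j; rewrite f_on (inj_eq enum_val_inj).
- move=> v Vv; exists (fun i => \sum_t (e i t)^* * v t) => x.
  apply: (mulfI c_neq0); rewrite -rho_scalar // /opapp.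
  under eq_bigr do rewrite rhoS -mulrA; rewrite -mulr_sumr; congr (_ * _).
  under eq_bigr do rewrite mulr_suml; rewrite exchange_big; apply: eq_bigr => i _.
  by rewrite mulr_suml; apply: eq_bigr => t _; rewrite -mulrA mulrC.
- by move=> s t; rewrite rhoS -[c](mulKf S_neq0) Sc mulr1.
Qed.

End Spectral.

Section PartialTrace.
Variables (K : numClosedFieldType) (p n : nat) (J : {set 'I_n}).
Local Notation m := #|J|.
Local Notation ptraceJ := (@ptrace p K n J).
Implicit Types (x y w : Basis p n) (z : Vec p m) (rho : Op p K n).

Definition agree x y := [forall j, (j \notin J) ==> (x j == y j)].

Lemma agreexx x : agree x x.
Proof. by apply/forallP => j; rewrite eqxx implybT. Qed.

Lemma agree_sym x y : agree x y = agree y x.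
Proof. by apply/forallP/forallP => xy j; rewrite eq_sym; apply: xy. Qed.

Lemma resJ_agree_eq x y : (resJ J x == resJ J y) && agree x y = (x == y).
Proof.
apply/andP/eqP => [[/eqP xyJ /forallP xy]|->]; last by rewrite eqxx agreexx.
apply/ffunP => j; have [jJ|jNJ] := boolP (j \in J); last exact/eqP/(implyP (xy j)).
by have := congr1 (fun f : Basis p m => f (enum_rank_in jJ j)) xyJ; rewrite !ffunE enum_rankK_in.
Qed.

Definition extJ z : Vec p n :=
  [ffun j => if [pick i | enum_val i == j] is Some i then z i else (0, 0)].

Lemma extJ_out z j : j \notin J -> extJ z j = (0, 0).
Proof.
move=> jNJ; rewrite ffunE; case: pickP => // i /eqP ij.
by move: (enum_valP i); rewrite ij (negbTE jNJ).
Qed.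

Lemma piJ_extJ z : piJ J (extJ z) = z.
Proof.
apply/ffunP => i; rewrite !ffunE; case: pickP => [i' /eqP/enum_val_inj -> //|].
by move/(_ i); rewrite eqxx.
Qed.

Lemma extJ_piJ (y : Vec p n) : (forall j, j \notin J -> y j = (0, 0)) -> extJ (piJ J y) = y.
Proof.
move=> y_out; apply/ffunP => j; have [jJ|jNJ] := boolP (j \in J); last by rewrite extJ_out ?y_out.
rewrite ffunE; case: pickP => [i /eqP <-|]; first by rewrite ffunE.
by move/(_ (enum_rank_in jJ j)); rewrite enum_rankK_in ?eqxx.
Qed.

Lemma mem_sigmaJ (C : {set Vec p n}) z : (z \in sigmaJ J C) = (extJ z \in C).
Proof.
apply/imsetP/idP => [[y]|extC]; last first.
  exists (extJ z); last by rewrite piJ_extJ.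
  by rewrite inE extC; apply/forallP => j; apply/implyP => /extJ_out ->.
rewrite inE => /andP[yC /forallP y_out] ->.
by rewrite extJ_piJ // => j jNJ; apply/eqP/(implyP (y_out j)).
Qed.

Lemma extJ_enum_val z i : extJ z (enum_val i) = z i.
Proof. by have /ffunP/(_ i) := piJ_extJ z; rewrite ffunE. Qed.

Lemma resJ_add_extJ x z : resJ J (x + Xpart (extJ z)) = resJ J x + Xpart z.
Proof. by apply/ffunP => i; have := extJ_enum_val z i; rewrite !ffunE => ->. Qed.

Lemma agree_add_extJ x y z : agree (x + Xpart (extJ z)) y = agree x y.
Proof.
apply: eq_forallb => j; case: (boolP (j \in J)) => //= jNJ.
by have := extJ_out z jNJ; rewrite !ffunE => ->; rewrite addr0.
Qed.

Lemma fdot_extJ x z : fdot (Zpart (extJ z)) x = fdot (Zpart z) (resJ J x).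
Proof.
rewrite /fdot (bigID (mem J)) /= [X in _ + X]big1 ?addr0 => [|j jNJ]; last first.
  by rewrite ffunE extJ_out // mul0r.
rewrite big_enum_val; apply: eq_bigr => i _.
by have := extJ_enum_val z i; rewrite !ffunE => ->.
Qed.

Lemma Eop_extJ z x y :
  Eop K (extJ z) x y = if agree x y then Eop K z (resJ J x) (resJ J y) else 0.
Proof.
rewrite !EopE fdot_extJ -resJ_agree_eq resJ_add_extJ agree_sym agree_add_extJ.
by rewrite [agree y x]agree_sym; case: (agree x y); rewrite ?andbF ?andbT.
Qed.

Lemma ptraceE rho s t : ptraceJ rho s t =
  \sum_x \sum_y (if [&& resJ J x == s, resJ J y == t & agree x y] then rho x y else 0).
Proof. by apply: eq_bigr => x _; rewrite big_mkcond. Qed.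

Lemma sum_ptrace (F : Basis p m -> Basis p m -> K) rho :
  \sum_u \sum_w F u w * ptraceJ rho u w =
  \sum_x \sum_y (if agree x y then F (resJ J x) (resJ J y) else 0) * rho x y.
Proof.
transitivity (\sum_u \sum_w \sum_x \sum_y
    (if [&& resJ J x == u, resJ J y == w & agree x y] then F u w * rho x y else 0)).
  apply: eq_bigr => u _; apply: eq_bigr => w _; rewrite ptraceE mulr_sumr.
  apply: eq_bigr => x _; rewrite mulr_sumr; apply: eq_bigr => y _.
  by case: ifP; rewrite ?mulr0.
under eq_bigr do rewrite exchange_big; rewrite exchange_big; apply: eq_bigr => x _.
under eq_bigr do rewrite exchange_big; rewrite exchange_big; apply: eq_bigr => y _.
rewrite (bigD1 (resJ J x)) //= [X in _ + X]big1 ?addr0 => [|u /negbTE u_neq]; last first.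
  by apply: big1 => w _; rewrite eq_sym u_neq.
rewrite (bigD1 (resJ J y)) //= big1 ?addr0 => [|w /negbTE w_neq]; last first.
  by rewrite eq_sym w_neq andbF.
by rewrite !eqxx; case: (agree x y); rewrite ?mul0r.
Qed.

Lemma ptrace_hermitian rho : hermitian_op rho -> hermitian_op (ptraceJ rho).
Proof.
move=> rho_herm s t; rewrite !ptraceE rmorph_sum exchange_big; apply: eq_bigr => y _.
rewrite rmorph_sum; apply: eq_bigr => x _; rewrite [agree y x]agree_sym rho_herm.
by case: (resJ J x == t); case: (resJ J y == s); case: (agree x y); rewrite /= ?conjC0.
Qed.

Lemma ptrace_trace rho : \sum_s ptraceJ rho s s = \sum_x rho x x.
Proof.
transitivity (\sum_u \sum_w (u == w)%:R * ptraceJ rho u w).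
  apply: eq_bigr => u _; rewrite (bigD1 u) //= eqxx mul1r big1 ?addr0 // => w.
  by rewrite eq_sym => /negbTE->; rewrite mul0r.
rewrite sum_ptrace; apply: eq_bigr => x _.
rewrite (bigD1 x) //= agreexx eqxx mul1r big1 ?addr0 // => y.
rewrite eq_sym -resJ_agree_eq; case: (agree x y); rewrite ?mul0r // andbT.
by move/negbTE->; rewrite mul0r.
Qed.

Lemma Eop_coord_ptrace z rho : Eop_coord z (ptraceJ rho) = Eop_coord (extJ z) rho.
Proof.
rewrite /Eop_coord sum_ptrace; apply: eq_bigr => x _; apply: eq_bigr => y _.
by rewrite Eop_extJ; case: (agree x y); rewrite ?conjC0.
Qed.

Lemma opmul_Eop_ptrace z rho s t :
  opmul (Eop K z) (ptraceJ rho) s t = ptraceJ (opmul (Eop K (extJ z)) rho) s t.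
Proof.
rewrite -[LHS]/(opapp (Eop K z) (ptraceJ rho ^~ t) s) opapp_Eop !ptraceE.
rewrite [RHS](reindex_inj (addIr (Xpart (extJ z)))) mulr_sumr; apply: eq_bigr => x _.
rewrite mulr_sumr; apply: eq_bigr => y _.
rewrite resJ_add_extJ agree_add_extJ -[resJ J x == _](inj_eq (addIr (Xpart z))) subrK.
case: ifP => [/and3P[/eqP <- _ _]|_]; last by rewrite mulr0.
rewrite -[opmul _ _ _ _]/(opapp (Eop K (extJ z)) (rho ^~ y) (x + Xpart (extJ z))).
by rewrite opapp_Eop !addrK fdot_extJ.
Qed.

Lemma ptrace_scale c rho rho' : (forall x y, rho x y = c * rho' x y) ->
  forall s t, ptraceJ rho s t = c * ptraceJ rho' s t.
Proof.
move=> rhoE s t; rewrite !ptraceE mulr_sumr; apply: eq_bigr => x _.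
by rewrite mulr_sumr; apply: eq_bigr => y _; rewrite rhoE; case: ifP; rewrite ?mulr0.
Qed.

End PartialTrace.

Section StabilizerState.
Variables (K : numClosedFieldType) (p n : nat).
Hypothesis p_prime : prime p.
Variables (C : {set Vec p n}) (lam : Op p K n -> K) (phi : Basis p n -> K).
Hypothesis phi_in : inQ C lam phi.
Hypothesis phi_unit : \sum_x phi x * (phi x)^* = 1.
Local Notation achar := (@achar K p).

Lemma Eop_shift g w : g \in C ->
  achar (fdot (Zpart g) w) * phi w = lam (Eop K g) * phi (w + Xpart g).
Proof. by move=> gC; rewrite -(phi_in (inS_E K gC)) opapp_Eop addrK. Qed.

Lemma lam_Eop_conjM g : g \in C -> lam (Eop K g) * (lam (Eop K g))^* = 1.
Proof.
move=> gC.
have phi_shift : \sum_(w : Basis p n) phi (w + Xpart g) * (phi (w + Xpart g))^* = 1.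
  by rewrite -phi_unit [RHS](reindex_inj (addIr (Xpart g))).
rewrite -[LHS]mulr1 -{1}phi_shift -phi_unit.
rewrite mulr_sumr; apply: eq_bigr => w _.
by rewrite mulrACA -rmorphM -Eop_shift // rmorphM mulrACA achar_conjM // mul1r.
Qed.

Hypothesis C_selfdual : C = sdual C.

Lemma Eop_coord_proj_notin y : y \notin C -> Eop_coord y (proj phi) = 0.
Proof.
rewrite C_selfdual inE => /forallPn[g]; rewrite negb_imply => /andP[gC symp_neq0].
apply: (achar_fixed0 p_prime symp_neq0).
rewrite !Eop_coordE [LHS](reindex_inj (addIr (Xpart g))) mulr_sumr; apply: eq_bigr => w _.
rewrite /proj -[LHS]mul1r -(lam_Eop_conjM gC) addrAC.
have achar_symp : (achar (fdot (Zpart y) (w + Xpart g)))^* * achar (fdot (Zpart g) (w + Xpart y))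
    * (achar (fdot (Zpart g) w))^* = achar (symp y g) * (achar (fdot (Zpart y) w))^*.
  rewrite !achar_conj // -!acharD // symp_fdot !fdotDr (fdotC (Zpart g) (Xpart y)).
  by congr achar; ring.
transitivity ((achar (fdot (Zpart y) (w + Xpart g)))^* *
    (lam (Eop K g) * phi (w + Xpart y + Xpart g)) * (lam (Eop K g) * phi (w + Xpart g))^*).
  by rewrite rmorphM; ring.
by rewrite -!Eop_shift // !rmorphM [RHS]mulrA -achar_symp; ring.
Qed.

End StabilizerState.

Theorem lemma15 (K : numClosedFieldType) (p n : nat) (p_prime : prime p)
  (C : {set Vec p n}) (C_selfdual : C = sdual C)
  (J : {set 'I_n}) (J_ne0 : J != set0) (J_proper : J != [set: 'I_n])
  (lam : Op p K n -> K) (lam_char : is_char C lam)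
  (lam' : Op p K #|J| -> K) (lam'_char : is_char (sigmaJ J C) lam')
  (compat : forall (z : Vec p #|J|) (y : Vec p n),
      z \in sigmaJ J C -> y \in C ->
      (forall j, j \notin J -> y j = (0, 0)) -> piJ J y = z ->
      lam' (@Eop p K _ z) = lam (@Eop p K _ y))
  (phi : Basis p n -> K) (phi_in : inQ C lam phi)
  (phi_unit : \sum_x phi x * (phi x)^* = 1) :
  completely_mixed (inQ (sigmaJ J C) lam') (@ptrace p K n J (proj phi)).
Proof.
set rho := ptrace (proj phi).
have rho_range v : inQ (sigmaJ J C) lam' (opapp rho v).
  apply: (opapp_inQ p_prime lam'_char) => z zS u w.
  have extC : extJ z \in C by rewrite -mem_sigmaJ.
  rewrite opmul_Eop_ptrace (compat _ _ zS extC _ (piJ_extJ z)) => [|j]; last exact: extJ_out.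
  exact/ptrace_scale/(opmul_proj_inQ phi_in)/inS_E.
have [c rho_scalar] : exists c, forall v, inQ (sigmaJ J C) lam' v ->
    forall s, opapp rho v s = c * v s.
  apply: (opapp_scalar_inQ p_prime) => z zNS.
  by rewrite Eop_coord_ptrace (Eop_coord_proj_notin p_prime phi_in) // -mem_sigmaJ.
apply: (completely_mixed_scalar (c := c)) => //.
- exact: inQ_eq.
- exact: inQ_scale.
- exact/ptrace_hermitian/proj_hermitian.
- by rewrite ptrace_trace.
Qed.
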